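(* Let $G$ be a network, $s,t$ nodes and $S\in[S_{min},1]$. Let $(\pi_1,\pi_2)$ be an optimal solution of the CT-Constrained Survivability Min-QoS problem with $W(\pi_2)\ge W(\pi_1)$. Let $(\tilde\pi_1,\tilde\pi_2)$ be an optimal solution of the Constrained Survivability Min-Max-QoS problem with $W(\tilde\pi_2)\ge W(\tilde\pi_1)$. Then $W(\pi_2)\le 2\,W(\tilde\pi_2)$.
   Context: Network: a directed graph $G=(V,E)$ with $M=|E|$. Each link has a failure probability $p_e\in(0,p_{max}]$ with $p_{max}<1$, and a positive weight $w_e$. Let $S_{min}=(1-p_{max})^M$. Paths are identified with link sets, and $W(\pi)=\sum_{e\in\pi}w_e$. A survivable connection is a pair $(\pi_1,\pi_2)$ of simple $s$–$t$ paths; the two paths may coincide. Its survivability level is $\prod_{e\in\pi_1\cap\pi_2}(1-p_e)$, equal to $1$ if empty. CT-CSMQ problem: minimize $W(\pi_1)+W(\pi_2)$ over survivable connections with survivability level $\ge S$. Constrained Survivability Min-Max-QoS (CSMMQ) problem: find a survivable connection $(\pi_1,\pi_2)$ minimizing $W(\pi_2)$ subject to $W(\pi_1)\le W(\pi_2)$ and survivability level $\ge S$. *)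

From HB Require Import structures.
From mathcomp Require Import all_boot all_order all_algebra.
Set Implicit Arguments. Unset Strict Implicit. Unset Printing Implicit Defensive.
Import Order.TTheory GRing.Theory Num.Theory.
Local Open Scope ring_scope.

Fixpoint walk (V : eqType) (s t : V) (q : seq (V * V)) : bool :=
  match q with
  | [::] => s == t
  | e :: q' => (e.1 == s) && walk e.2 t q'
  end.

Definition simple_path_seq (V : finType) (Ed : {set V * V}) (s t : V)
    (q : seq (V * V)) : bool :=
  [&& all (fun e => e \in Ed) q, walk s t q & uniq (s :: map snd q)].

(* Paths identified with their link sets. *)
Definition simple_path (V : finType) (Ed : {set V * V}) (s t : V)
    (P : {set V * V}) : Prop :=
  exists q, simple_path_seq Ed s t q /\ P = [set e in q].

Definition Wt (R : numDomainType) (V : finType) (w : V * V -> R)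
    (P : {set V * V}) : R := \sum_(e in P) w e.

Definition surv_level (R : numDomainType) (V : finType) (p : V * V -> R)
    (P1 P2 : {set V * V}) : R := \prod_(e in P1 :&: P2) (1 - p e).

Definition feasible (R : numDomainType) (V : finType) (Ed : {set V * V})
    (s t : V) (p : V * V -> R) (S : R) (P1 P2 : {set V * V}) : Prop :=
  [/\ simple_path Ed s t P1, simple_path Ed s t P2 & S <= surv_level p P1 P2].

Definition CT_CSMQ_opt (R : numDomainType) (V : finType) (Ed : {set V * V})
    (s t : V) (p w : V * V -> R) (S : R) (P1 P2 : {set V * V}) : Prop :=
  feasible Ed s t p S P1 P2 /\
  forall Q1 Q2, feasible Ed s t p S Q1 Q2 ->
    Wt w P1 + Wt w P2 <= Wt w Q1 + Wt w Q2.

Definition CSMMQ_opt (R : numDomainType) (V : finType) (Ed : {set V * V})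
    (s t : V) (p w : V * V -> R) (S : R) (P1 P2 : {set V * V}) : Prop :=
  [/\ feasible Ed s t p S P1 P2, Wt w P1 <= Wt w P2 &
  forall Q1 Q2, feasible Ed s t p S Q1 Q2 -> Wt w Q1 <= Wt w Q2 ->
    Wt w P2 <= Wt w Q2].

From HB Require Import structures.
From mathcomp Require Import all_boot all_order all_algebra.
Set Implicit Arguments. Unset Strict Implicit. Unset Printing Implicit Defensive.
Import Order.TTheory GRing.Theory Num.Theory.
Local Open Scope ring_scope.

(* The CSMMQ optimum (T1, T2) is feasible for CT-CSMQ, so
   W(P2) <= W(P1) + W(P2) <= W(T1) + W(T2) <= 2 W(T2), the first step
   because weights are positive and the last because W(T1) <= W(T2). *)

Lemma simple_path_sub (V : finType) (Ed : {set V * V}) (s t : V)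
    (P : {set V * V}) :
  simple_path Ed s t P -> P \subset Ed.
Proof.
move=> [q [/and3P [/allP q_Ed _ _] ->]].
by apply/subsetP => e; rewrite inE => /q_Ed.
Qed.

Lemma Wt_ge0 (R : numDomainType) (V : finType) (w : V * V -> R)
    (P : {set V * V}) :
  (forall e, e \in P -> 0 <= w e) -> 0 <= Wt w P.
Proof. by move=> w_ge0; apply: sumr_ge0. Qed.

Lemma simple_path_Wt_ge0 (R : numDomainType) (V : finType)
    (Ed : {set V * V}) (w : V * V -> R) (s t : V) (P : {set V * V}) :
  (forall e, e \in Ed -> 0 <= w e) -> simple_path Ed s t P -> 0 <= Wt w P.
Proof.
move=> w_ge0 /simple_path_sub /subsetP P_Ed.
by apply: Wt_ge0 => e /P_Ed /w_ge0.
Qed.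

Lemma CT_CSMQ_opt_le_feasible (R : numDomainType) (V : finType)
    (Ed : {set V * V}) (s t : V) (p w : V * V -> R) (S : R)
    (P1 P2 Q1 Q2 : {set V * V}) :
  (forall e, e \in Ed -> 0 <= w e) ->
  CT_CSMQ_opt Ed s t p w S P1 P2 -> feasible Ed s t p S Q1 Q2 ->
  Wt w Q1 <= Wt w Q2 ->
  Wt w P2 <= 2 * Wt w Q2.
Proof.
move=> w_ge0 [[P1_path _ _] P_opt] Q_feas Q12.
have P1_ge0 := simple_path_Wt_ge0 w_ge0 P1_path.
apply: le_trans (_ : Wt w P1 + Wt w P2 <= _); first by rewrite lerDr.
apply: le_trans (P_opt _ _ Q_feas) _.
by rewrite mulr_natl mulr2n lerD2r.
Qed.

Theorem theorem9 (R : realFieldType) (V : finType) (Ed : {set V * V})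
    (p w : V * V -> R) (pmax : R) (s t : V) (S : R)
    (P1 P2 T1 T2 : {set V * V}) :
  pmax < 1 ->
  (forall e, e \in Ed -> 0 < p e <= pmax) ->
  (forall e, e \in Ed -> 0 < w e) ->
  (1 - pmax) ^+ #|Ed| <= S -> S <= 1 ->
  CT_CSMQ_opt Ed s t p w S P1 P2 -> Wt w P1 <= Wt w P2 ->
  CSMMQ_opt Ed s t p w S T1 T2 -> Wt w T1 <= Wt w T2 ->
  Wt w P2 <= 2 * Wt w T2.
Proof.
move=> _ _ w_gt0 _ _ P_opt _ [T_feas _ _] T12.
have w_ge0 e (e_Ed : e \in Ed) : 0 <= w e by exact/ltW/w_gt0.
exact: CT_CSMQ_opt_le_feasible w_ge0 P_opt T_feas T12.
Qed.
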